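(* Affine rigidity in $\mathbb{R}^d$ is a generic property of hypergraphs: for every hypergraph $\Theta$, either every generic framework $(p,\Theta)$ with $p:V(\Theta)\to\mathbb{R}^d$ is affinely rigid in $\mathbb{R}^d$, or no generic such framework is affinely rigid in $\mathbb{R}^d$.
   Context: A hypergraph $\Theta$ has a finite vertex set $V$ and hyperedges that are subsets of $V$; a framework $(p,\Theta)$ pairs it with a configuration $p:V\to\mathbb{R}^d$. A configuration is generic if its coordinates satisfy no nonzero polynomial equation with rational coefficients. Frameworks $(p,\Theta),(q,\Theta)$ in $\mathbb{R}^d$ are affinely equivalent if for each hyperedge $h$ there is an invertible affine map $g_h$ of $\mathbb{R}^d$ with $g_h(p(u))=q(u)$ for $u\in h$, and affinely congruent if a single invertible affine map $g$ satisfies $g(p(u))=q(u)$ for all $u\in V$. $(p,\Theta)$ is affinely rigid in $\mathbb{R}^d$ if every framework in $\mathbb{R}^d$ affinely equivalent to it is affinely congruent to it. *)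

From HB Require Import structures.
From mathcomp Require Import all_boot all_order all_algebra.
From mathcomp Require Import reals.
From mathcomp Require Import mpoly.
Set Implicit Arguments. Unset Strict Implicit. Unset Printing Implicit Defensive.
Import Order.TTheory GRing.Theory Num.Theory.
Local Open Scope ring_scope.

Definition hypergraph (V : finType) := {set {set V}}.

Definition config (R : realType) (d : nat) (V : finType) := V -> 'rV[R]_d.

Definition ncoord (V : finType) (d : nat) := #|{: V * 'I_d}|.

Definition coords (R : realType) (d : nat) (V : finType) (p : config R d V)
  : 'I_(ncoord V d) -> R :=
  fun i => let: (u, k) := enum_val i in p u 0 k.

Definition generic (R : realType) (d : nat) (V : finType) (p : config R d V) :=
  forall P : {mpoly rat[ncoord V d]}, P != 0 ->
    (map_mpoly (ratr : rat -> R) P).@[coords p] != 0.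

Definition inv_affine (R : realType) (d : nat) (g : 'rV[R]_d -> 'rV[R]_d) :=
  exists (A : 'M[R]_d) (b : 'rV[R]_d),
    A \in unitmx /\ forall x, g x = x *m A + b.

Definition affinely_equivalent (R : realType) (d : nat) (V : finType)
  (Th : hypergraph V) (p q : config R d V) :=
  forall h, h \in Th -> exists g, inv_affine g /\ forall u, u \in h -> g (p u) = q u.

Definition affinely_congruent (R : realType) (d : nat) (V : finType)
  (p q : config R d V) :=
  exists g, inv_affine g /\ forall u, g (p u) = q u.

Definition affinely_rigid (R : realType) (d : nat) (V : finType)
  (Th : hypergraph V) (p : config R d V) :=
  forall q : config R d V, affinely_equivalent Th p q -> affinely_congruent p q.

From Stdlib Require Import FunctionalExtensionality Classical.
From HB Require Import structures.
From mathcomp Require Import all_boot all_order all_algebra.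
From mathcomp Require Import reals.
From mathcomp Require Import mpoly.
From mathcomp Require Import fraction ring.
Set Implicit Arguments. Unset Strict Implicit. Unset Printing Implicit Defensive.
Import Order.TTheory GRing.Theory Num.Theory.
Local Open Scope ring_scope.

(* For d > 0, (p, Th) is affinely rigid iff two subspace-inclusion conditions
   on the coordinate matrix of p hold: every vector of values that is an affine
   function of the coordinates on each hyperedge is globally one, and either
   all points coincide or the difference vectors of some hyperedge span all
   difference vectors.  Such rank conditions are preserved by injective field
   morphisms.  For generic p, evaluation at p is an injective ring morphism
   from Q[X] into R, hence extends to the field of fractions Q(X), so the
   conditions hold at p iff they hold at the symbolic configuration X. *)

Section FracLift.
Local Open Scope quotient_scope.
Variables (R : idomainType) (K : fieldType) (f : {rmorphism R -> K}).
Hypothesis f_inj : injective f.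

Definition frac_lift (z : {fraction R}) : K := let r := repr z in f \n_r / f \d_r.

Lemma lift_denom_neq0 (r : {ratio R}) : f \d_r != 0.
Proof. by rewrite raddf_eq0 // denom_ratioP. Qed.

Lemma frac_lift_pi (r : {ratio R}) : frac_lift (\pi_({fraction R}) r) = f \n_r / f \d_r.
Proof.
rewrite /frac_lift; have := FracField.equivf_r r; set s := repr _ => e.
apply/eqP; rewrite eqr_div ?lift_denom_neq0 // -!rmorphM; apply/eqP; congr (f _).
by rewrite mulrC -e mulrC.
Qed.

Lemma frac_lift_tofrac x : frac_lift (tofrac x) = f x.
Proof.
rewrite /tofrac; unlock; rewrite frac_lift_pi !numden_Ratio ?oner_neq0 //.
by rewrite rmorph1 divr1.
Qed.

Lemma frac_lift_is_zmod_morphism : zmod_morphism frac_lift.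
Proof.
move=> z w; rewrite -[z]reprK -[w]reprK; set a := repr z; set b := repr w.
have -> : \pi_({fraction R}) a - \pi_({fraction R}) b
    = \pi_({fraction R}) (FracField.addf a (FracField.oppf b)).
  by rewrite FracField.pi_add FracField.pi_opp.
rewrite !frac_lift_pi /= !numden_Ratio ?mulf_neq0 ?denom_ratioP //.
have fa := lift_denom_neq0 a; have fb := lift_denom_neq0 b.
by rewrite rmorphD !rmorphM rmorphN; field; apply/andP.
Qed.

Lemma frac_lift_is_monoid_morphism : monoid_morphism frac_lift.
Proof.
split; first by rewrite -[1]/(tofrac 1) frac_lift_tofrac rmorph1.
move=> z w; rewrite -[z]reprK -[w]reprK; set a := repr z; set b := repr w.
have -> : \pi_({fraction R}) a * \pi_({fraction R}) b
    = \pi_({fraction R}) (FracField.mulf a b) by rewrite FracField.pi_mul.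
rewrite !frac_lift_pi /= !numden_Ratio ?mulf_neq0 ?denom_ratioP //.
have fa := lift_denom_neq0 a; have fb := lift_denom_neq0 b.
by rewrite !rmorphM; field; apply/andP.
Qed.

Definition frac_lift_rmorphism : {rmorphism {fraction R} -> K} :=
  HB.pack frac_lift
    (GRing.isZmodMorphism.Build _ _ frac_lift frac_lift_is_zmod_morphism)
    (GRing.isMonoidMorphism.Build _ _ frac_lift frac_lift_is_monoid_morphism).

End FracLift.

Lemma at_most_once_bounded (T : eqType) (s : seq T) (P : T -> nat -> bool) :
  (forall x, x \in s -> forall a b, P x a -> P x b -> a = b) ->
  exists N, forall x, x \in s -> forall t, P x t -> (t < N)%N.
Proof.
elim: s => [|x s IH] once; first by exists 0%N.
have [|N HN] := IH; first by move=> y ys; apply: once; rewrite inE ys orbT.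
have [[a Pxa]|nPx] := classic (exists a, P x a).
  exists (maxn N a.+1) => y; rewrite inE => /orP [/eqP -> t Pxt|ys t Pyt].
    by rewrite (once x (mem_head _ _) _ _ Pxt Pxa) leq_max ltnSn orbT.
  by rewrite leq_max (HN y ys t Pyt).
exists N => y; rewrite inE => /orP [/eqP -> t Pxt|ys t Pyt]; last exact: HN Pyt.
by case: nPx; exists t.
Qed.

Section SubspaceAvoidance.
Variable R : numFieldType.

Lemma submxB_sub m1 m2 n (A B : 'M[R]_(m1, n)) (C : 'M[R]_(m2, n)) :
  (A <= C)%MS -> (B <= C)%MS -> ((A - B)%R <= C)%MS.
Proof. by move=> sAC sBC; rewrite addmx_sub // -scaleN1r scalemx_sub. Qed.

Lemma line_meets_submx_once m n (v w : 'rV[R]_n) (M : 'M[R]_(m, n)) a b :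
  ~~ (v <= M)%MS -> ((v + a *: w)%R <= M)%MS -> ((v + b *: w)%R <= M)%MS -> a = b.
Proof.
move=> vM vawM vbwM; apply/eqP; apply: contraNT vM => neq_ab.
have wM : (w <= M)%MS.
  rewrite -(eqmx_scale _ (_ : a - b != 0)) ?subr_eq0 // scalerBl.
  have -> : a *: w - b *: w = (v + a *: w) - (v + b *: w).
    by rewrite opprD addrACA subrr add0r.
  exact: submxB_sub vawM vbwM.
by rewrite -(addrK (a *: w) v) submxB_sub // scalemx_sub.
Qed.

Lemma row_avoid_submx m0 m n (W : 'M[R]_(m0, n)) (Ms : seq 'M[R]_(m, n)) :
  (forall M, M \in Ms -> ~~ (W <= M)%MS) ->
  exists2 v : 'rV[R]_n, (v <= W)%MS & forall M, M \in Ms -> ~~ (v <= M)%MS.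
Proof.
elim: Ms => [|M Ms IH] WMs; first by exists 0; rewrite ?sub0mx.
have [|v vW vMs] := IH; first by move=> M' M'Ms; apply: WMs; rewrite inE M'Ms orbT.
have [vM|vM] := boolP (v <= M)%MS; last first.
  by exists v => // M'; rewrite inE => /orP [/eqP ->|/vMs].
have /row_subPn [i wM] := WMs M (mem_head _ _); set w := row i W in wM.
pose on_line (M' : 'M[R]_(m, n)) t := ((v + t.+1%:R *: w)%R <= M')%MS.
have [N HN] : exists N, forall M', M' \in Ms -> forall t, on_line M' t -> (t < N)%N.
  apply: at_most_once_bounded => M' M'Ms a b Ma Mb.
  apply/eqP; rewrite -eqSS -(eqr_nat R); apply/eqP.
  exact: line_meets_submx_once (vMs _ M'Ms) Ma Mb.
exists (v + N.+1%:R *: w); first by rewrite addmx_sub // scalemx_sub // row_sub.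
move=> M'; rewrite inE => /orP [/eqP ->|M'Ms]; last first.
  by apply/negP => /(HN _ M'Ms); rewrite ltnn.
apply: contra wM => vwM.
rewrite -(eqmx_scale _ (_ : N.+1%:R != 0 :> R)) ?pnatr_eq0 //.
have -> : N.+1%:R *: w = (v + N.+1%:R *: w) - v by rewrite addrC addKr.
exact: submxB_sub vwM vM.
Qed.

Lemma exists_separating_col m n (M : 'M[R]_(m, n)) (v : 'rV[R]_n) :
  ~~ (v <= M)%MS -> exists2 c : 'cV[R]_n, M *m c = 0 & v *m c = 1%:M.
Proof.
rewrite submxE => /eqP nz.
have [j vj] : exists j, (v *m cokermx M) 0 j != 0.
  case: (pickP (fun j => (v *m cokermx M) 0 j != 0)) => [j vj|v0]; first by exists j.
  by case: nz; apply/rowP => j; rewrite [RHS]mxE; move/negbFE/eqP: (v0 j).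
exists (cokermx M *m (((v *m cokermx M) 0 j)^-1 *: delta_mx j 0)).
  by rewrite mulmxA mulmx_coker mul0mx.
rewrite mulmxA -scalemxAr -colE; apply/rowP => a.
by rewrite !ord1 !mxE mulVf ?eqxx //; move: vj; rewrite !mxE.
Qed.

(* The product of the polynomials [det (1 + X A_i)] is nonzero at 0, so it
   has fewer than [size Q] roots and some [1, ..., size Q] is not a root. *)
Lemma exists_units_shift (I : finType) n (A : I -> 'M[R]_n) :
  exists2 t : R, t != 0 & forall i, 1%:M + t *: A i \in unitmx.
Proof.
pose Q := \prod_i \det (1%:M + 'X *: map_mx polyC (A i)).
have QE t : Q.[t] = \prod_i \det (1%:M + t *: A i).
  rewrite -horner_evalE rmorph_prod; apply: eq_bigr => i _.
  rewrite -det_map_mx; congr (\det _); apply/matrixP => a b.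
  by rewrite !mxE rmorphD rmorphM rmorph_nat /= !horner_evalE hornerX hornerC.
have Q_neq0 : Q != 0.
  apply/eqP => Q0; have := QE 0; rewrite Q0 horner0.
  under eq_bigr do rewrite scale0r addr0 det1.
  by rewrite big1_eq => /eqP; rewrite eq_sym oner_eq0.
pose ts := [seq i.+1%:R : R | i <- iota 0 (size Q)].
have uniq_ts : uniq ts.
  by rewrite map_inj_uniq ?iota_uniq // => a b /eqP; rewrite eqr_nat eqSS => /eqP.
have : ~~ all (root Q) ts.
  apply/negP => roots_ts; have := max_poly_roots Q_neq0 roots_ts uniq_ts.
  by rewrite size_map size_iota ltnn.
case/allPn => _ /mapP [i _ ->]; rewrite /root QE prodf_seq_neq0 => /allP units.
exists i.+1%:R; first by rewrite pnatr_eq0.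
by move=> j; rewrite unitmxE unitfE; apply: units; rewrite mem_index_enum.
Qed.

End SubspaceAvoidance.

Section CoordsEval.
Variables (R : realType) (d : nat) (V : finType).

Definition coords_eval (p : config R d V)
    : {rmorphism {mpoly rat[ncoord V d]} -> R} :=
  meval (coords p) \o map_mpoly (ratr : rat -> R).

Definition coord_index (u : V) (k : 'I_d) : 'I_(ncoord V d) := enum_rank (u, k).

Lemma coords_evalX p u k : coords_eval p 'X_(coord_index u k) = p u 0 k.
Proof. by rewrite /= map_mpolyX mevalXU /coords /coord_index enum_rankK. Qed.

Lemma coords_eval_inj p : generic p -> injective (coords_eval p).
Proof.
move=> gen_p P Q ePQ; apply/eqP; rewrite -subr_eq0; apply/negPn/negP => nzPQ.
have := gen_p _ nzPQ.
by rewrite -[_.@[_]]/(coords_eval p (P - Q)) rmorphB ePQ subrr eqxx.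
Qed.

End CoordsEval.

Section RigidityTest.
Variables (d : nat) (V : finType) (Th : hypergraph V).

(* Row [w] lies in the row space of [affine_on_mx x S] iff, on the vertices of
   [S], [w] is an affine function of the coordinates [x]. *)
Definition homog_mx (K : fieldType) (x : V -> 'I_d -> K) : 'M[K]_(1 + d, #|V|) :=
  col_mx (const_mx 1) (\matrix_(k, i) x (enum_val i) k).
Definition support_mx (K : fieldType) (S : {set V}) : 'M[K]_#|V| :=
  diag_mx (\row_i (enum_val i \in S)%:R).
Definition affine_on_mx (K : fieldType) (x : V -> 'I_d -> K) (S : {set V}) :=
  col_mx (homog_mx x) (1%:M - support_mx K S).
Definition diff_mx (K : fieldType) (x : V -> 'I_d -> K) (S : {set V})
    : 'M[K]_(#|{: V * V}|, d) :=
  \matrix_(i, k) let: (u, v) := enum_val i in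
     if (u \in S) && (v \in S) then x u k - x v k else 0.

Definition affine_glue_test (K : fieldType) (x : V -> 'I_d -> K) :=
  (\bigcap_(h in Th) <<affine_on_mx x h>> <= homog_mx x)%MS.
Definition spanning_edge_test (K : fieldType) (x : V -> 'I_d -> K) :=
  (diff_mx x setT == 0) || [exists h in Th, (diff_mx x setT <= diff_mx x h)%MS].
Definition rigidity_test (K : fieldType) (x : V -> 'I_d -> K) :=
  affine_glue_test x && spanning_edge_test x.

Section Transfer.
Variables (K K' : fieldType) (f : {rmorphism K -> K'}) (x : V -> 'I_d -> K).
Let fx u k := f (x u k).

Lemma map_homog_mx : homog_mx fx = map_mx f (homog_mx x).
Proof.
rewrite /homog_mx map_col_mx; congr col_mx; apply/matrixP => i j; rewrite !mxE //.
by rewrite rmorph1.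
Qed.

Lemma map_support_mx S : support_mx K' S = map_mx f (support_mx K S).
Proof.
apply/matrixP => i j; rewrite !mxE; case: (i == j) => /=; last by rewrite rmorph0.
by rewrite rmorphMn rmorph_nat.
Qed.

Lemma map_affine_on_mx S : affine_on_mx fx S = map_mx f (affine_on_mx x S).
Proof.
by rewrite /affine_on_mx map_col_mx map_homog_mx map_support_mx map_mxB map_mx1.
Qed.

Lemma map_diff_mx S : diff_mx fx S = map_mx f (diff_mx x S).
Proof.
apply/matrixP => i j; rewrite !mxE; case: (enum_val i) => u v.
by case: ifP; rewrite ?rmorphB ?rmorph0.
Qed.

Lemma map_bigcap_affine_on_mx :
  (map_mx f (\bigcap_(h in Th) <<affine_on_mx x h>>) :=:
   \bigcap_(h in Th) <<affine_on_mx fx h>>)%MS.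
Proof.
apply/eqmxP; pose P (a : 'M[K]_#|V|) (b : 'M[K']_#|V|) := (map_mx f a == b)%MS.
apply: (big_ind2 P); rewrite /P.
- by rewrite map_mx1; apply/eqmxP.
- move=> a1 b1 a2 b2 /eqmxP e1 /eqmxP e2; apply/eqmxP.
  exact: eqmx_trans (map_capmx _ _ _) (cap_eqmx e1 e2).
- by move=> h _; rewrite map_affine_on_mx; apply/eqmxP; apply: map_genmx.
Qed.

Lemma rigidity_test_map : rigidity_test fx = rigidity_test x.
Proof.
rewrite /rigidity_test /affine_glue_test /spanning_edge_test.
rewrite -map_bigcap_affine_on_mx map_homog_mx map_submx map_diff_mx map_mx_eq0.
by congr (_ && (_ || _)); apply: eq_existsb => h; rewrite !map_diff_mx map_submx.
Qed.

End Transfer.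
End RigidityTest.

Definition cfg_coords (R : realType) d (V : finType) (p : config R d V)
  : V -> 'I_d -> R := fun u k => p u 0 k.

Definition symbolic_coords d (V : finType)
  : V -> 'I_d -> {fraction {mpoly rat[ncoord V d]}} :=
  fun u k => tofrac 'X_(coord_index u k).

Lemma rigidity_test_generic (R : realType) d (V : finType) (Th : hypergraph V)
    (p : config R d V) : generic p ->
  rigidity_test Th (cfg_coords p) = rigidity_test Th (@symbolic_coords d V).
Proof.
move=> gen_p.
rewrite -(rigidity_test_map Th (frac_lift_rmorphism (coords_eval_inj gen_p))).
congr (rigidity_test Th _).
apply: functional_extensionality => u; apply: functional_extensionality => k.
rewrite /cfg_coords -coords_evalX; symmetry.
exact: (frac_lift_tofrac (coords_eval_inj gen_p)).
Qed.

Section Characterization.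
Variables (R : realType) (d : nat) (V : finType) (Th : hypergraph V).
Variable p : config R d V.
Local Notation pcoords := (cfg_coords p).

Definition agrees_inv_affine (S : {set V}) (B : 'M[R]_d) :=
  exists2 G, G \in unitmx & exists b, forall u, u \in S -> p u *m G + b = p u *m B.

Definition inv_affine_glue := forall B : 'M[R]_d,
  (forall h, h \in Th -> agrees_inv_affine h B) -> agrees_inv_affine setT B.

Lemma row_diff_mx S i : row i (diff_mx pcoords S) =
  let: (u, v) := enum_val i in if (u \in S) && (v \in S) then p u - p v else 0.
Proof.
apply/rowP => k; rewrite !mxE; case: (enum_val i) => u v.
by case: ifP => _; rewrite !mxE.
Qed.

Lemma agrees_inv_affineP S B : agrees_inv_affine S B <->
  exists2 G, G \in unitmx & diff_mx pcoords S *m G = diff_mx pcoords S *m B.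
Proof.
split=> [[G unitG [b pGb]]|[G unitG eGB]]; exists G => //.
  apply/row_matrixP => i; rewrite !row_mul row_diff_mx.
  case: (enum_val i) => u v; case: ifP => [/andP [uS vS]|_]; last by rewrite !mul0mx.
  by rewrite !mulmxBl -(pGb u uS) -(pGb v vS) opprD addrACA subrr addr0.
have [u0 /= u0S|noS] := pickP (fun u => u \in S); last first.
  by exists 0 => u uS; have := noS u; rewrite /= uS.
exists (p u0 *m B - p u0 *m G) => u uS.
have := congr1 (row (enum_rank (u, u0))) eGB.
rewrite !row_mul row_diff_mx enum_rankK uS u0S !mulmxBl => e.
by rewrite -(subrK (p u0 *m B) (p u *m B)) -e -addrA (addrC (- _)).
Qed.

Lemma spanning_edge_inv_affine_glue : spanning_edge_test Th pcoords -> inv_affine_glue.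
Proof.
case/orP=> [/eqP diff0|/existsP [h /andP [hTh sub_h]]] B agreeB.
  by apply/agrees_inv_affineP; exists 1%:M; rewrite ?unitmx1 // diff0 !mul0mx.
have /agrees_inv_affineP [G unitG eGB] := agreeB h hTh.
apply/agrees_inv_affineP; exists G => //.
by have [W ->] := submxP sub_h; rewrite -!mulmxA eGB.
Qed.

(* Pick a difference vector [v] outside every hyperedge's difference space.
   The singular map [B = 1 - c0 v] kills [v], yet on each hyperedge [h] it
   agrees with the invertible [B + ch v], where [ch] annihilates the
   differences of [h]. *)
Lemma inv_affine_glue_spanning_edge : inv_affine_glue -> spanning_edge_test Th pcoords.
Proof.
move=> glue; apply/negPn/negP; rewrite negb_or => /andP [nz /existsPn no_span].
set W := diff_mx pcoords setT in nz no_span.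
have [|v vW v_out] :=
  row_avoid_submx (W := W) (Ms := 0 :: [seq diff_mx pcoords h | h <- enum Th]).
  move=> M; rewrite inE => /orP [/eqP ->|/mapP [h hTh ->]].
    by apply/negP => /submx0null; apply/eqP.
  by rewrite mem_enum in hTh; have := no_span h; rewrite hTh.
have v_neq0 : ~~ (v <= (0 : 'M[R]_(#|{: V * V}|, d)))%MS := v_out _ (mem_head _ _).
have [c0 _ vc0] := exists_separating_col v_neq0.
pose B := 1%:M - c0 *m v.
have vB : v *m B = 0 by rewrite mulmxBr mulmx1 mulmxA vc0 mul1mx subrr.
have /agrees_inv_affineP [G unitG eGB] : agrees_inv_affine setT B.
  apply: glue => h hTh; apply/agrees_inv_affineP.
  have /exists_separating_col [ch hch vch] : ~~ (v <= diff_mx pcoords h)%MS.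
    by apply: v_out; rewrite inE map_f ?orbT // mem_enum.
  pose N := (ch - c0) *m v.
  have NN : N *m N = 0.
    by rewrite /N mulmxA -(mulmxA _ v) mulmxBr vch vc0 subrr mulmx0 mul0mx.
  exists (B + ch *m v); last by rewrite mulmxDr mulmxA hch mul0mx addr0.
  have -> : B + ch *m v = 1%:M + N by rewrite /B /N mulmxBl addrAC addrA.
  have [] // := mulmx1_unit (A := 1%:M + N) (B := 1%:M - N).
  by rewrite mulmxBr mulmx1 mulmxDl mul1mx NN addr0 addrK.
have vG : v *m G = 0.
  by have [w vw] := submxP vW; rewrite vw -mulmxA eGB mulmxA -vw.
by move: v_neq0; rewrite -(mulmxK unitG v) vG mul0mx sub0mx.
Qed.

Definition affine_image_on (S : {set V}) (q : config R d V) :=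
  exists (A : 'M[R]_d) (b : 'rV[R]_d), forall u, u \in S -> q u = p u *m A + b.

Definition affine_glue := forall q : config R d V,
  (forall h, h \in Th -> affine_image_on h q) -> affine_image_on setT q.

Definition coord_row (q : config R d V) (k : 'I_d) : 'rV[R]_#|V| :=
  \row_i q (enum_val i) 0 k.

Lemma mul_homog_mx (y : 'rV[R]_(1 + d)) i : (y *m homog_mx pcoords) 0 i =
  y 0 (lshift d 0) + \sum_j y 0 (rshift 1 j) * p (enum_val i) 0 j.
Proof.
rewrite -{1}[y]hsubmxK /homog_mx mul_row_col mxE; congr (_ + _).
  by rewrite mxE big_ord1 !mxE mulr1.
by rewrite mxE; apply: eq_bigr => j _; rewrite !mxE.
Qed.

Lemma affine_mapE (A : 'M[R]_d) (b : 'rV[R]_d) u k :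
  (p u *m A + b) 0 k = b 0 k + \sum_j A j k * p u 0 j.
Proof. by rewrite !mxE addrC; congr (_ + _); apply: eq_bigr => j _; rewrite mulrC. Qed.

Lemma mul_support_mx (S : {set V}) (w : 'rV[R]_#|V|) i :
  (w *m support_mx R S) 0 i = if enum_val i \in S then w 0 i else 0.
Proof. by rewrite mul_mx_diag !mxE; case: ifP; rewrite ?mulr1 ?mulr0. Qed.

Lemma row_entryB n (a b : 'rV[R]_n) i : (a - b) 0 i = a 0 i - b 0 i.
Proof. by rewrite !mxE. Qed.

Lemma affine_image_onP S q :
  affine_image_on S q <-> forall k, (coord_row q k <= affine_on_mx pcoords S)%MS.
Proof.
split=> [[A [b qAb]] k|q_aff].
  pose y : 'rV[R]_(1 + d) := row_mx (b 0 k)%:M (\row_j A j k).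
  have yE i : (y *m homog_mx pcoords) 0 i = (p (enum_val i) *m A + b) 0 k.
    rewrite mul_homog_mx affine_mapE /y (row_mxEl ((b 0 k)%:M)) mxE eqxx mulr1n.
    by congr (_ + _); apply: eq_bigr => j _; rewrite (row_mxEr ((b 0 k)%:M)) mxE.
  have off_S : (coord_row q k - y *m homog_mx pcoords) *m support_mx R S = 0.
    apply/rowP => i; rewrite mul_support_mx [RHS]mxE; case: ifP => // iS.
    by rewrite row_entryB yE mxE (qAb _ iS) subrr.
  have -> : coord_row q k =
      row_mx y (coord_row q k - y *m homog_mx pcoords) *m affine_on_mx pcoords S.
    by rewrite mul_row_col mulmxBr mulmx1 off_S subr0 addrC subrK.
  exact: submxMl.
pose W k := coord_row q k *m pinvmx (affine_on_mx pcoords S).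
have WE k : coord_row q k =
    lsubmx (W k) *m homog_mx pcoords + rsubmx (W k) *m (1%:M - support_mx R S).
  by rewrite -mul_row_col hsubmxK /W mulmxKpV.
exists (\matrix_(j, k) lsubmx (W k) 0 (rshift 1 j)).
exists (\row_k lsubmx (W k) 0 (lshift d 0)) => u uS; apply/rowP => k.
have := congr1 (fun w : 'rV[R]_#|V| => w 0 (enum_rank u)) (WE k).
rewrite mxE enum_rankK => ->.
rewrite [LHS]mxE mulmxBr mulmx1 row_entryB mul_support_mx enum_rankK uS.
rewrite subrr addr0 mul_homog_mx affine_mapE enum_rankK.
rewrite [in RHS]mxE; congr (_ + _).
by apply: eq_bigr => j _; rewrite [in RHS]mxE.
Qed.

Lemma affine_on_mx_setT : (affine_on_mx pcoords setT :=: homog_mx pcoords)%MS.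
Proof.
rewrite /affine_on_mx.
have -> : support_mx R [set: V] = 1%:M by apply/matrixP => i j; rewrite !mxE in_setT.
rewrite subrr; apply: eqmx_trans (eqmx_sym (addsmxE _ _)) _.
exact: addsmx0.
Qed.

(* Each row of the intersection is the coordinate row of a configuration that
   lies on the diagonal line ([d > 0] provides a coordinate to read it from). *)
Lemma affine_glueP : (0 < d)%N -> affine_glue <-> affine_glue_test Th pcoords.
Proof.
move=> d_gt0; split=> [glue|test q q_aff].
  apply/row_subP => i; set c := row i _.
  have c_aff h : h \in Th -> (c <= affine_on_mx pcoords h)%MS.
    move=> hTh; have := row_sub i (\bigcap_(h in Th) <<affine_on_mx pcoords h>>)%MS.
    by move/sub_bigcapmxP => /(_ h hTh); rewrite genmxE.
  pose q : config R d V := fun u => const_mx (c 0 (enum_rank u)).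
  have qc k : coord_row q k = c by apply/rowP => j; rewrite !mxE enum_valK.
  have /affine_image_onP/(_ (Ordinal d_gt0)) : affine_image_on setT q.
    by apply: glue => h hTh; apply/affine_image_onP => k; rewrite qc c_aff.
  by rewrite qc affine_on_mx_setT.
apply/affine_image_onP => k; rewrite affine_on_mx_setT; apply: submx_trans test.
apply/sub_bigcapmxP => h hTh; rewrite genmxE.
by have /affine_image_onP := q_aff h hTh; apply.
Qed.

End Characterization.

Section Rigidity.
Variables (R : realType) (d : nat) (V : finType) (Th : hypergraph V).
Variable p : config R d V.

Lemma rigid_inv_affine_glue : affinely_rigid Th p -> inv_affine_glue Th p.
Proof.
move=> rigid_p B agreeB.
have [|g [[G [b [unitG gE]]] gpB]] := rigid_p (fun u => p u *m B).
  move=> h hTh; have [G unitG [b pGb]] := agreeB h hTh.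
  by exists (fun y => y *m G + b); split; [exists G, b | exact: pGb].
by exists G => //; exists b => u _; rewrite -gE gpB.
Qed.

(* For a suitable [t != 0], [p + t q] is hyperedge-wise an invertible affine
   image of [p]; rigidity makes it a global one, and solving for [q] exhibits
   [q] as a global affine image of [p]. *)
Lemma rigid_affine_glue : affinely_rigid Th p -> affine_glue Th p.
Proof.
move=> rigid_p q q_aff.
have [Ab qAb] : exists Ab : {set V} -> 'M[R]_d * 'rV[R]_d, forall h, h \in Th ->
    forall u, u \in h -> q u = p u *m (Ab h).1 + (Ab h).2.
  apply: (@fin_all_exists _ (fun=> ('M[R]_d * 'rV[R]_d)%type)
    (fun h Ab => h \in Th -> forall u, u \in h -> q u = p u *m Ab.1 + Ab.2)) => h.
  have [hTh|] := boolP (h \in Th); last by exists (0, 0).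
  by have [A [b qE]] := q_aff h hTh; exists (A, b).
have [t t_neq0 unit_t] := exists_units_shift (fun h => (Ab h).1).
have [|g [[G [c [_ gE]]] gpq]] := rigid_p (fun u => p u + t *: q u).
  move=> h hTh; exists (fun y => y *m (1%:M + t *: (Ab h).1) + t *: (Ab h).2).
  split; first by exists (1%:M + t *: (Ab h).1), (t *: (Ab h).2).
  move=> u uh; rewrite (qAb h hTh u uh) mulmxDr mulmx1 -scalemxAr scalerDr.
  by rewrite addrA.
exists (t^-1 *: (G - 1%:M)), (t^-1 *: c) => u _.
have tq : p u *m G - p u + c = t *: q u.
  by rewrite addrAC -gE gpq addrAC subrr add0r.
by rewrite -scalemxAr mulmxBr mulmx1 -scalerDr tq scalerA mulVf // scale1r.
Qed.

Lemma glue_affinely_rigid :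
  affine_glue Th p -> inv_affine_glue Th p -> affinely_rigid Th p.
Proof.
move=> aglue iglue q equiv_pq.
have [A0 [b0 qE]] : affine_image_on p setT q.
  apply: aglue => h hTh; have [g [[G [b [_ gE]]] gpq]] := equiv_pq h hTh.
  by exists G, b => u uh; rewrite -gpq // gE.
have [|G unitG [b pGb]] := iglue A0.
  move=> h hTh; have [g [[G [b [unitG gE]]] gpq]] := equiv_pq h hTh.
  exists G => //; exists (b - b0) => u uh.
  by rewrite addrA -gE gpq // qE ?in_setT // addrK.
exists (fun y => y *m G + (b + b0)); split; first by exists G, (b + b0).
by move=> u; rewrite addrA pGb ?in_setT // qE ?in_setT.
Qed.

Lemma affinely_rigidP : (0 < d)%N ->
  affinely_rigid Th p <-> rigidity_test Th (cfg_coords p).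
Proof.
move=> d_gt0; split=> [rigid_p|/andP [aglue span]].
  apply/andP; split; first exact/(affine_glueP Th p d_gt0)/rigid_affine_glue.
  exact/inv_affine_glue_spanning_edge/rigid_inv_affine_glue.
apply: glue_affinely_rigid; first exact/(affine_glueP Th p d_gt0).
exact: spanning_edge_inv_affine_glue.
Qed.

Lemma affinely_rigid_dim0 : d = 0%N -> affinely_rigid Th p.
Proof.
move=> d0 q _; exists id; split.
  by exists 1%:M, 0; split; [exact: unitmx1 | move=> y; rewrite mulmx1 addr0].
by move=> u; apply/rowP => k; have := ltn_ord k; rewrite {2}d0.
Qed.

End Rigidity.

Theorem corollary3p9 (R : realType) (d : nat) (V : finType) (Th : hypergraph V) :
  (forall p : config R d V, generic p -> affinely_rigid Th p) \/
  (forall p : config R d V, generic p -> ~ affinely_rigid Th p).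
Proof.
have [d0|d_gt0] := posnP d; first by left => p _; apply: affinely_rigid_dim0.
have [[p0 [gen_p0 rigid_p0]]|no_rigid] :=
  classic (exists p0 : config R d V, generic p0 /\ affinely_rigid Th p0).
  left => p gen_p; apply/(affinely_rigidP Th p d_gt0).
  rewrite (rigidity_test_generic Th gen_p) -(rigidity_test_generic Th gen_p0).
  exact/(affinely_rigidP Th p0 d_gt0).
by right => p gen_p rigid_p; apply: no_rigid; exists p.
Qed.
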